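(* Let $D_+, D_-$ be a pair of SBP operators of order $q\ge1$ on $[a,b]$ with associated data $H,S,\mathbf{p}_0,\mathbf{p}_n,\mathbf{x}$, and assume it is nullspace consistent, i.e. $\ker D_+=\operatorname{span}\{\mathbf{1}\}$. Let $\tilde D_+ = D_+ + H^{-1}\mathbf{p}_0\mathbf{p}_0^\top$ and let $(\lambda,\mathbf{w})$ be an eigenpair of $\tilde D_+$ (over $\mathbb{C}$) with $\operatorname{Re}(\lambda)=0$. Then $(\mathbf{x}^j)^\top H\mathbf{w} = 0$ for every $j=0,\dots,q$.
   Context: Let $[a,b]$ be an interval with $b>a$ and $n\ge 1$. For $\mathbf{x}\in\mathbb{R}^{n+1}$, $\mathbf{x}^j$ denotes elementwise exponentiation, with $\mathbf{x}^0=\mathbf{1}=(1,\dots,1)^\top$. Matrices $D_+, D_-\in\mathbb{R}^{(n+1)\times(n+1)}$ form a pair of SBP (summation-by-parts) operators of order $q\ge 1$ on $[a,b]$ if there exist matrices $H,S\in\mathbb{R}^{(n+1)\times(n+1)}$ and vectors $\mathbf{p}_0,\mathbf{p}_n,\mathbf{x}\in\mathbb{R}^{n+1}$ such that: (A) $D_\pm \mathbf{x}^j = j\mathbf{x}^{j-1}$, $\mathbf{p}_0^\top\mathbf{x}^j = a^j$, $\mathbf{p}_n^\top \mathbf{x}^j = b^j$ for $j=0,\dots,q$ (with $0\cdot\mathbf{x}^{-1}:=\mathbf{0}$); (B) $H=H^\top$ is positive definite; (C) $HD_+ + D_+^\top H = -\mathbf{p}_0\mathbf{p}_0^\top + \mathbf{p}_n\mathbf{p}_n^\top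 + S$ with $S=S^\top$ positive semidefinite; (D) $HD_+ + D_-^\top H = -\mathbf{p}_0\mathbf{p}_0^\top + \mathbf{p}_n\mathbf{p}_n^\top$; (E) $\mathbf{x}=(x_0,\dots,x_n)^\top$ with $x_i\ne x_j$ for $i\ne j$. *)

From HB Require Import structures.
From mathcomp Require Import all_boot all_order all_algebra.
From mathcomp Require Import complex.
Set Implicit Arguments. Unset Strict Implicit. Unset Printing Implicit Defensive.
Import Order.TTheory GRing.Theory Num.Theory.
Local Open Scope ring_scope.

Definition xpow (R : ringType) (m : nat) (x : 'cV[R]_m) (j : nat) : 'cV[R]_m :=
  \col_i (x i 0 ^+ j).

Definition sym_mx (R : ringType) (m : nat) (A : 'M[R]_m) : Prop := A^T = A.

Definition posdef_mx (R : numDomainType) (m : nat) (A : 'M[R]_m) : Prop :=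
  sym_mx A /\ forall v : 'cV[R]_m, v != 0 -> 0 < (v^T *m A *m v) 0 0.

Definition psd_mx (R : numDomainType) (m : nat) (A : 'M[R]_m) : Prop :=
  sym_mx A /\ forall v : 'cV[R]_m, 0 <= (v^T *m A *m v) 0 0.

Definition SBP_pair (R : numDomainType) (n q : nat) (a b : R)
    (Dp Dm H S : 'M[R]_n.+1) (p0 pn x : 'cV[R]_n.+1) : Prop :=
  [/\ (forall j, (j <= q)%N ->
         [/\ Dp *m xpow x j = j%:R *: xpow x j.-1,
             Dm *m xpow x j = j%:R *: xpow x j.-1,
             p0^T *m xpow x j = (a ^+ j)%:M &
             pn^T *m xpow x j = (b ^+ j)%:M]),
      posdef_mx H,
      H *m Dp + Dp^T *m H = - (p0 *m p0^T) + pn *m pn^T + S /\ psd_mx S,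
      H *m Dp + Dm^T *m H = - (p0 *m p0^T) + pn *m pn^T &
      injective (fun i : 'I_n.+1 => x i 0)].

Definition nullspace_consistent (R : ringType) (m : nat) (Dp : 'M[R]_m) : Prop :=
  forall v : 'cV[R]_m, Dp *m v = 0 <-> exists c : R, v = c *: const_mx 1.

From mathcomp Require Import all_boot all_order all_algebra.
From mathcomp Require Import complex ring lra.
Set Implicit Arguments.
Unset Strict Implicit.
Unset Printing Implicit Defensive.

Import Order.TTheory GRing.Theory Num.Theory.
Local Open Scope ring_scope.

(* Write w = u + i v and lambda = i beta.  The penalized operator D~ satisfies the
   energy identity 2 y^T H D~ y = (p0^T y)^2 + (pn^T y)^2 + y^T S y.  At y = u and
   y = v the left-hand sides are -2 beta u^T H v and 2 beta u^T H v, so all four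
   boundary values p0^T u, pn^T u, p0^T v, pn^T v vanish.  The same identity makes
   D~ nonsingular under nullspace consistency, which rules out beta = 0.  For beta <> 0,
   the dual relation H D~ = pn pn^T - D_-^T H and D_- x^k = k x^(k-1) give
   beta (x^k)^T H v = k (x^(k-1))^T H u and beta (x^k)^T H u = - k (x^(k-1))^T H v,
   and induction on k kills all these moments. *)

Lemma posdef_unitmx (R : numFieldType) (m : nat) (H : 'M[R]_m.+1) :
  posdef_mx H -> H \in unitmx.
Proof.
move=> [_ Hpos]; rewrite unitmxE unitfE; apply/det0P => -[v v_neq0 vH].
have := Hpos v^T; rewrite trmx_eq0 => /(_ v_neq0).
by rewrite trmxK vH mul0mx mxE ltxx.
Qed.

Lemma coupled_recurrence_eq0 (K : fieldType) (V : lmodType K) (beta : K)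
    (f g : nat -> V) (q : nat) :
  beta != 0 ->
  (forall k, (k <= q)%N ->
     beta *: f k = k%:R *: g k.-1 /\ beta *: g k = - (k%:R *: f k.-1)) ->
  forall k, (k <= q)%N -> f k = 0 /\ g k = 0.
Proof.
move=> beta_neq0 rec; elim=> [|k IHk] kq.
  have [rf rg] := rec 0%N kq.
  by split; apply: (scalerI beta_neq0); rewrite scaler0 ?rf ?rg scale0r ?oppr0.
have [rf rg] := rec k.+1 kq; have [fk gk] := IHk (ltnW kq).
by split; apply: (scalerI beta_neq0); rewrite scaler0 ?rf ?rg /= ?fk ?gk scaler0 ?oppr0.
Qed.

Lemma xpow0 (R : nzRingType) (m : nat) (x : 'cV[R]_m) : xpow x 0 = const_mx 1.
Proof. by apply/matrixP => i j; rewrite !mxE expr0. Qed.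

Lemma mx11_eq0 (K : nmodType) (A : 'M[K]_1) : A 0 0 = 0 -> A = 0.
Proof. by move=> A0; rewrite [A]mx11_scalar A0 raddf0. Qed.

Section PenalizedOperator.
Variables (R : realFieldType) (m : nat).
Variables (Dp Dm H S : 'M[R]_m) (p0 pn : 'cV[R]_m).

Definition penalized_op := Dp + invmx H *m p0 *m p0^T.
Local Notation Dt := penalized_op.

Hypothesis H_sym : H^T = H.
Hypothesis H_unit : H \in unitmx.

Lemma mulmx_penalized_op : H *m Dt = H *m Dp + p0 *m p0^T.
Proof. by rewrite mulmxDr !mulmxA mulmxV // mul1mx. Qed.

Definition qform (A : 'M[R]_m) (y : 'cV[R]_m) : R := (y^T *m A *m y) 0 0.

Lemma qformD (A B : 'M[R]_m) y : qform (A + B) y = qform A y + qform B y.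
Proof. by rewrite /qform mulmxDr mulmxDl mxE. Qed.

Lemma qformN (A : 'M[R]_m) y : qform (- A) y = - qform A y.
Proof. by rewrite /qform mulmxN mulNmx mxE. Qed.

Lemma qform_trmx (A : 'M[R]_m) y : qform A^T y = qform A y.
Proof.
by rewrite /qform [in LHS](_ : _ *m y = (y^T *m A *m y)^T) ?mxE // !trmx_mul trmxK mulmxA.
Qed.

Lemma qform_outer (z y : 'cV[R]_m) : qform (z *m z^T) y = ((z^T *m y) 0 0) ^+ 2.
Proof.
rewrite /qform !mulmxA -(mulmxA _ z^T) -{1}[z]trmxK -trmx_mul.
by rewrite [LHS]mxE big_ord1 mxE expr2.
Qed.

Hypothesis SBP_S :
  H *m Dp + Dp^T *m H = - (p0 *m p0^T) + pn *m pn^T + S.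

Lemma energy_identity (y : 'cV[R]_m) :
  2 * qform (H *m Dt) y =
  ((p0^T *m y) 0 0) ^+ 2 + ((pn^T *m y) 0 0) ^+ 2 + qform S y.
Proof.
have := congr1 (qform^~ y) SBP_S.
rewrite -{2}H_sym -trmx_mul !qformD qformN qform_trmx !qform_outer.
rewrite mulmx_penalized_op qformD qform_outer; lra.
Qed.
Hypothesis S_psd : psd_mx S.

Lemma boundary_values_vanish (beta : R) (u v : 'cV[R]_m) :
  Dt *m u = - beta *: v -> Dt *m v = beta *: u ->
  [/\ p0^T *m u = 0, pn^T *m u = 0, p0^T *m v = 0 & pn^T *m v = 0].
Proof.
move=> Du Dv; set h := (u^T *m H *m v) 0 0.
have Eu : qform (H *m Dt) u = - beta * h.
  by rewrite /qform -!mulmxA Du -!scalemxAr [(_ *: _ : 'M_1) 0 0]mxE !mulmxA.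
have Ev : qform (H *m Dt) v = beta * h.
  rewrite /qform -!mulmxA Dv -!scalemxAr [(_ *: _ : 'M_1) 0 0]mxE !mulmxA; congr (_ * _).
  by rewrite /h -[u^T *m H *m v]trmxK [(_^T : 'M_1) 0 0]mxE !trmx_mul !trmxK H_sym mulmxA.
have := energy_identity u; have := energy_identity v; rewrite Eu Ev => Qv Qu.
have : ((p0^T *m u) 0 0) ^+ 2 + ((pn^T *m u) 0 0) ^+ 2 + ((p0^T *m v) 0 0) ^+ 2
    + ((pn^T *m v) 0 0) ^+ 2 + (qform S u + qform S v) = 0 by lra.
move/eqP; rewrite !paddr_eq0 ?addr_ge0 ?sqr_ge0 ?(S_psd.2 u) ?(S_psd.2 v) //.
by rewrite !sqrf_eq0 => /andP[/andP[/andP[/andP[/eqP/mx11_eq0 -> /eqP/mx11_eq0 ->]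
  /eqP/mx11_eq0 ->] /eqP/mx11_eq0 ->] _].
Qed.

Lemma penalized_op_kernel (y : 'cV[R]_m) :
  nullspace_consistent Dp -> p0^T *m const_mx 1 = 1 -> Dt *m y = 0 -> y = 0.
Proof.
move=> Dp_ker p0_one Dy.
have : ((p0^T *m y) 0 0) ^+ 2 + (((pn^T *m y) 0 0) ^+ 2 + qform S y) = 0.
  by rewrite addrA -energy_identity /qform -!mulmxA Dy !mulmx0 mxE mulr0.
move/eqP; rewrite paddr_eq0 ?addr_ge0 ?sqr_ge0 ?(S_psd.2 y) // sqrf_eq0.
move=> /andP[/eqP/mx11_eq0 p0y _]; move: Dy.
rewrite /penalized_op mulmxDl -!mulmxA p0y !mulmx0 addr0 => /Dp_ker[c yc].
move: p0y; rewrite yc -scalemxAr p0_one.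
by move/eqP; rewrite scalemx_eq0 oner_eq0 orbF => /eqP->; rewrite scale0r.
Qed.

Hypothesis SBP_dual : H *m Dp + Dm^T *m H = - (p0 *m p0^T) + pn *m pn^T.

Lemma mulmx_penalized_op_dual : H *m Dt = pn *m pn^T - Dm^T *m H.
Proof.
apply: (addIr (Dm^T *m H)); rewrite subrK mulmx_penalized_op addrAC SBP_dual.
by rewrite addrAC addNr add0r.
Qed.

Lemma moment_recursion (X Y y : 'cV[R]_m) (k : nat) :
  Dm *m X = k%:R *: Y -> pn^T *m y = 0 ->
  X^T *m H *m (Dt *m y) = - (k%:R *: (Y^T *m H *m y)).
Proof.
move=> DmX pny; rewrite mulmxA -(mulmxA X^T) mulmx_penalized_op_dual.
rewrite mulmxBr mulmxBl mulmxA -(mulmxA _ pn^T) pny mulmx0 sub0r.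
by rewrite mulmxA -trmx_mul DmX linearZ -!scalemxAl.
Qed.

Lemma moments_vanish (X : nat -> 'cV[R]_m) (q : nat) (beta : R) (u v : 'cV[R]_m) :
  (forall k, (k <= q)%N -> Dm *m X k = k%:R *: X k.-1) ->
  beta != 0 -> Dt *m u = - beta *: v -> Dt *m v = beta *: u ->
  forall k, (k <= q)%N -> (X k)^T *m H *m u = 0 /\ (X k)^T *m H *m v = 0.
Proof.
move=> DmX beta_neq0 Du Dv k kq.
have [_ pnu _ pnv] := boundary_values_vanish Du Dv.
pose f k := (X k)^T *m H *m v; pose g k := (X k)^T *m H *m u.
suff [fk gk] : f k = 0 /\ g k = 0 by [].
apply: (coupled_recurrence_eq0 (f := f) (g := g) beta_neq0 _ kq) => {}k {}kq; split.
- have := moment_recursion (DmX k kq) pnu.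
  by rewrite Du -scalemxAr scaleNr => /oppr_inj.
- by have := moment_recursion (DmX k kq) pnv; rewrite Dv -scalemxAr.
Qed.

End PenalizedOperator.

Section RealAndImaginaryParts.
Variable R : rcfType.
Local Notation cplx A := (map_mx (fun r : R => r%:C%C) A).

Lemma Re_cplx_mulmx (p r c : nat) (A : 'M[R]_(p, r)) (W : 'M[R[i]]_(r, c)) :
  map_mx (@complex.Re R) (cplx A *m W) = A *m map_mx (@complex.Re R) W.
Proof.
apply/matrixP => i j; rewrite !mxE (raddf_sum (@complex.Re R : Rcomplex R -> R)).
by apply: eq_bigr => k _; rewrite !mxE; case: (W k j) => ? ? /=; rewrite mul0r subr0.
Qed.

Lemma Im_cplx_mulmx (p r c : nat) (A : 'M[R]_(p, r)) (W : 'M[R[i]]_(r, c)) :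
  map_mx (@complex.Im R) (cplx A *m W) = A *m map_mx (@complex.Im R) W.
Proof.
apply/matrixP => i j; rewrite !mxE (raddf_sum (@complex.Im R : Rcomplex R -> R)).
by apply: eq_bigr => k _; rewrite !mxE; case: (W k j) => ? ? /=; rewrite mul0r addr0.
Qed.

Lemma cplx_mx_eq0 (p c : nat) (W : 'M[R[i]]_(p, c)) :
  map_mx (@complex.Re R) W = 0 -> map_mx (@complex.Im R) W = 0 -> W = 0.
Proof.
move=> /matrixP ReW /matrixP ImW; apply/matrixP => i j.
by have := ReW i j; have := ImW i j; rewrite !mxE; case: (W i j) => ? ? /= -> ->.
Qed.

Lemma imaginary_eigenpair_parts (m : nat) (A : 'M[R]_m) (lambda : R[i])
    (w : 'cV[R[i]]_m) :
  cplx A *m w = lambda *: w -> complex.Re lambda = 0 ->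
  A *m map_mx (@complex.Re R) w = - complex.Im lambda *: map_mx (@complex.Im R) w /\
  A *m map_mx (@complex.Im R) w = complex.Im lambda *: map_mx (@complex.Re R) w.
Proof.
case: lambda => [re im] /= Aw re0.
rewrite -Re_cplx_mulmx -Im_cplx_mulmx Aw re0.
by split; apply/matrixP => i j; rewrite !mxE; case: (w i j) => ? ? /=; ring.
Qed.

End RealAndImaginaryParts.

Theorem lemma4 (R : rcfType) (n q : nat) (a b : R)
    (Dp Dm H S : 'M[R]_n.+1) (p0 pn x : 'cV[R]_n.+1)
    (lambda : R[i]) (w : 'cV[R[i]]_n.+1) :
  (1 <= n)%N -> (1 <= q)%N -> a < b ->
  SBP_pair q a b Dp Dm H S p0 pn x ->
  nullspace_consistent Dp ->
  w != 0 ->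
  map_mx (fun r : R => r%:C%C) (Dp + invmx H *m p0 *m p0^T) *m w = lambda *: w ->
  complex.Re lambda = 0 ->
  forall j : nat, (j <= q)%N ->
    (map_mx (fun r : R => r%:C%C) (xpow x j))^T *m map_mx (fun r : R => r%:C%C) H *m w = 0.
Proof.
move=> _ _ _ [Dx H_pd [SBP_S S_psd] SBP_dual _] Dp_ker w_neq0 eig Re0 j jq.
have [H_sym H_unit] := (H_pd.1, posdef_unitmx H_pd).
have [Du Dv] := imaginary_eigenpair_parts eig Re0.
rewrite -/(penalized_op Dp H p0) in Du Dv.
have [beta0 | beta_neq0] := eqVneq (complex.Im lambda) 0.
  have [_ _ p0_one _] := Dx 0%N isT; rewrite xpow0 expr0 in p0_one.
  have Dt_ker := penalized_op_kernel H_sym H_unit SBP_S S_psd Dp_ker p0_one.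
  by case/eqP: w_neq0; apply: cplx_mx_eq0; apply: Dt_ker;
    rewrite ?Du ?Dv beta0 ?oppr0 scale0r.
have DmX k : (k <= q)%N -> Dm *m xpow x k = k%:R *: xpow x k.-1.
  by move=> kq; have [] := Dx k kq.
have [Hu Hv] := moments_vanish H_sym H_unit SBP_S S_psd SBP_dual DmX beta_neq0 Du Dv jq.
rewrite map_trmx -map_mxM; apply: cplx_mx_eq0.
  by rewrite Re_cplx_mulmx Hu.
by rewrite Im_cplx_mulmx Hv.
Qed.
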